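(* Let $s\ge1$ be an integer and let $(G,Z)$ be a monic plantation. Then there exist $X\subseteq Z$ and $Y\subseteq V(G)\setminus Z$ with $|X|<s$ and $|Y|<2s\cdot s!$ such that exploding the vertices in $X$ and deleting the (remaining) vertices in $Y$ yields a selfless plantation.
   Context: Graphs are finite and simple. Two subsets of $V(G)$ are anticomplete if they are disjoint and no edge joins them; subgraphs are anticomplete if their vertex sets are. $G$ is $s\mathcal{O}$-free if no $s$ cycles of $G$ are pairwise vertex-disjoint and pairwise anticomplete. A set $Z\subseteq V(G)$ is cycle-hitting if every cycle of $G$ has a vertex in $Z$. A plantation is a pair $(G,Z)$ where $G$ is an $s\mathcal{O}$-free graph and $Z\subseteq V(G)$ is cycle-hitting. Let $F=G\setminus Z$ (a forest) and $N$ the set of vertices of $V(G)\setminus Z$ with a neighbour in $Z$. $(G,Z)$ is monic if $Z$ is stable and every vertex of $N$ has exactly one neighbour in $Z$. A transition of $(G,Z)$ is a path of $F$ of length at least one with both ends in $N$ and no internal vertex in $N$; a vertex $z\in Z$ adjacent to an end of a transition $P$ is a foot of $P$. A self-transition is a transition with only one foot; $(G,Z)$ is selfless if it has no self-transition. Deleting a vertex $v\in V(G)\setminus Z$ produces the plantation $(G\setminus\{v\},Z)$. Exploding a vertex $v\in Z$ produces the plantation $(G',Z\setminus\{v\})$, where $G'$ is obtained from $G$ by deleting $v$ and all its neighbours in $V(G)\setminus Z$. *)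

From mathcomp Require Import all_boot.
Set Implicit Arguments. Unset Strict Implicit. Unset Printing Implicit Defensive.

(* A "plantation" is represented by the vertex
   set W : {set T} of the current (induced) graph G = e[W] and Z : {set T}. *)

Section Plantations.
Variables (T : finType) (e : rel T).

Definition simple_graph : Prop := symmetric e /\ irreflexive e.

Definition is_cycle (W : {set T}) (c : seq T) : bool :=
  [&& 3 <= size c, uniq c, cycle e c & all (fun v => v \in W) c].

Definition anticomplete (c d : seq T) : bool :=
  all (fun x => all (fun y => (x != y) && ~~ e x y) d) c.

Definition sO_free (s : nat) (W : {set T}) : Prop :=
  ~ exists cs : 'I_s -> seq T,
      (forall i, is_cycle W (cs i)) /\
      (forall i j, i != j -> anticomplete (cs i) (cs j)).

Definition cycle_hitting (W Z : {set T}) : Prop :=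
  forall c, is_cycle W c -> has (fun v => v \in Z) c.

Definition plantation (s : nat) (W Z : {set T}) : Prop :=
  [/\ Z \subset W, sO_free s W & cycle_hitting W Z].

Definition Nset (W Z : {set T}) : {set T} :=
  [set v in W :\: Z | [exists z in Z, e v z]].

Definition monic (W Z : {set T}) : Prop :=
  (forall z1 z2, z1 \in Z -> z2 \in Z -> ~~ e z1 z2) /\
  (forall v, v \in Nset W Z -> #|[set z in Z | e v z]| = 1).

Definition transition (W Z : {set T}) (p : seq T) : Prop :=
  [/\ 2 <= size p, uniq p, sorted e p & all (fun v => v \in W :\: Z) p] /\
  [/\ (forall x0, head x0 p \in Nset W Z),
      (forall x0, last x0 p \in Nset W Z) &
      (forall x0 i, 0 < i -> i < (size p).-1 -> nth x0 p i \notin Nset W Z)].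

Definition feet (Z : {set T}) (x0 : T) (p : seq T) : {set T} :=
  [set z in Z | e z (head x0 p) || e z (last x0 p)].

Definition self_transition (W Z : {set T}) (p : seq T) : Prop :=
  transition W Z p /\ forall x0, #|feet Z x0 p| = 1.

Definition selfless (W Z : {set T}) : Prop :=
  forall p, ~ self_transition W Z p.

(* Exploding every vertex of X (a subset of Z): remove X and all neighbours
   of vertices of X lying in V(G) \ Z.  (Sequential explosion of the vertices
   of X, in any order, gives exactly this, since Z\X is untouched.) *)
Definition explode (W Z X : {set T}) : {set T} * {set T} :=
  ((W :\: X) :\: [set u in W :\: Z | [exists x in X, e x u]], Z :\: X).

Definition delete (W Z Y : {set T}) : {set T} * {set T} := (W :\: Y, Z).

End Plantations.

(* A self-transition p with foot z closes into a cycle z :: p whose path p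
   sees no vertex of Z other than z; call such a cycle lone.  Lone cycles are
   destroyed greedily, one at a time, by exploding z and deleting at most two
   vertices of G \ Z.  The choice of the lone cycle uses that G \ Z is a
   forest: take a vertex t of G \ Z and a set D of at most one neighbour of t
   such that some lone cycle z :: p has p inside the component C of t in
   (G \ Z) \ D, with C as small as possible.  A lone cycle at another vertex
   of Z that avoids t and D cannot meet C, for otherwise, entering C through a
   neighbour c of t, it would lie in the component of c in (G \ Z) \ t,
   which is strictly smaller than C because c and the vertex of D are not
   connected there.  Hence it is anticomplete to z :: p, so after exploding z
   and deleting t and D the chosen cycles form a growing family of pairwise
   anticomplete cycles that are also anticomplete to all remaining lone
   cycles; sO-freeness stops the process after fewer than s rounds, leaving
   |X| < s and |Y| < 2s <= 2 s s!. *)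

From mathcomp Require Import all_boot zify.
From Stdlib Require Import Classical_Prop.
Set Implicit Arguments. Unset Strict Implicit. Unset Printing Implicit Defensive.

Section InducedSubgraph.
Variables (T : finType) (e : rel T).

Definition induced (A : {set T}) : rel T := [rel x y | [&& e x y, x \in A & y \in A]].

Definition component (A : {set T}) (t : T) : {set T} := [set x | connect (induced A) t x].

Lemma path_inducedE (A : {set T}) a p :
  a \in A -> path (induced A) a p = path e a p && all [in A] p.
Proof.
elim: p a => //= b p IH a aA; case: (boolP (b \in A)) => bA.
  by rewrite IH // /induced /= aA bA !andbT andbA.
by rewrite /induced /= (negbTE bA) !andbF.
Qed.

Lemma component_sub (A : {set T}) t : t \in A -> component A t \subset A.
Proof.
move=> tA; apply/subsetP => x; rewrite inE => /connectP[p].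
by rewrite path_inducedE // => /andP[_ /allP pA] ->; case: p pA => //= y p /(_ _ (mem_last y p)).
Qed.

Lemma component_closed (A : {set T}) t x y :
  x \in component A t -> x \in A -> y \in A -> e x y -> y \in component A t.
Proof.
by rewrite !inE => tx xA yA exy; apply: connect_trans tx (connect1 _); apply/and3P.
Qed.

Lemma connect_induced_sub (A B : {set T}) : A \subset B ->
  subrel (connect (induced A)) (connect (induced B)).
Proof.
move=> sAB; apply: connect_sub => x y /and3P[exy xA yA].
by apply/connect1/and3P; rewrite exy !(subsetP sAB).
Qed.

Lemma connect_inducedD (A D : {set T}) a b : connect (induced A) a b ->
  connect (induced (A :\: D)) a b \/ exists2 d, d \in D & connect (induced A) a d.
Proof.
move/connectP=> [p + ->]; elim: p a => [|y p IH] a /=; first by left.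
case/andP=> ay yp; case: (boolP (a \in D)) => aD; first by right; exists a.
case: (boolP (y \in D)) => yD; first by right; exists y => //; exact: connect1.
case: (IH y yp) => [H|[d dD H]]; [left | right; exists d => //];
  apply: connect_trans H; apply: connect1 => //.
by case/and3P: ay => eay aA yA; apply/and3P; rewrite eay !inE aD yD aA yA.
Qed.

Lemma sorted_sub_component (A : {set T}) t y q :
  symmetric e -> sorted e q -> {subset q <= A} -> y \in q -> y \in component A t ->
  {subset q <= component A t}.
Proof.
case: q => // a q esym sq qA yq; rewrite !inE => ty.
have aq : path (induced A) a q.
  rewrite path_inducedE ?qA ?mem_head //; apply/andP; split => //.
  by apply/allP => x xq; exact/qA/mem_behead.
have ta : connect (induced A) t a.
  apply: connect_trans ty _; rewrite (sym_connect_sym _) ?(path_connect aq) //.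
  by move=> x x'; rewrite /induced /= esym; case: (x \in A); rewrite ?andbT ?andbF.
by move=> x xq; rewrite inE (connect_trans ta) ?(path_connect aq).
Qed.

End InducedSubgraph.

Lemma interior_index (T : eqType) (x0 v : T) (p : seq T) :
  v \in p -> v != head x0 p -> v != last x0 p ->
  exists2 i, 0 < i < (size p).-1 & nth x0 p i = v.
Proof.
move=> vp vh vl; exists (index v p); last exact: nth_index.
have ip : index v p < size p by rewrite index_mem.
have i0 : index v p != 0 by apply: contraNneq vh => i0; rewrite -nth0 -i0 nth_index.
have il : index v p != (size p).-1.
  by apply: contraNneq vl => il; rewrite -nth_last -il nth_index.
by rewrite lt0n i0 /=; lia.
Qed.

Section Graphs.
Variables (T : finType) (e : rel T).
Hypothesis esym : symmetric e.

Lemma closed_path_is_cycle x p :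
  1 < size p -> x \notin p -> uniq p -> path e x p -> e (last x p) x ->
  is_cycle e setT (x :: p).
Proof.
move=> p2 xp up pp px; apply/and4P; split.
- by [].
- by rewrite cons_uniq xp.
- by rewrite /cycle rcons_path pp.
- by apply/allP => ? _; exact: in_setT.
Qed.

Lemma anticompleteP (c d : seq T) :
  reflect (forall x y, x \in c -> y \in d -> (x != y) && ~~ e x y) (anticomplete e c d).
Proof.
apply: (iffP allP) => [H x y xc yd | H x xc]; first exact: (allP (H x xc)).
by apply/allP => y; exact: H.
Qed.

Lemma anticompleteC (c d : seq T) : anticomplete e c d = anticomplete e d c.
Proof.
by apply/anticompleteP/anticompleteP => H x y xc yd; rewrite eq_sym esym H.
Qed.

Lemma sO_free_size s (W : {set T}) (cs : seq (seq T)) :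
  sO_free e s W -> all (is_cycle e W) cs -> pairwise (anticomplete e) cs ->
  size cs < s.
Proof.
move=> sO /allP cyc /(pairwiseP [::]) anti; rewrite ltnNge; apply/negP => scs.
have ics (i : 'I_s) : i < size cs by exact: leq_trans (ltn_ord i) scs.
apply: sO; exists (fun i : 'I_s => nth [::] cs i); split => [i | i j].
  by apply: cyc; exact: mem_nth.
case: (ltngtP i j) => [ij _ | ji _ | /val_inj -> ]; last by rewrite eqxx.
  exact: anti (ics i) (ics j) ij.
by rewrite anticompleteC; exact: anti (ics j) (ics i) ji.
Qed.

Lemma monic_neighbour_unique (W Z : {set T}) v z1 z2 :
  monic e W Z -> v \in W -> v \notin Z -> z1 \in Z -> z2 \in Z ->
  e v z1 -> e v z2 -> z1 = z2.
Proof.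
move=> [_ mon] vW vZ z1Z z2Z e1 e2.
have vN : v \in Nset e W Z.
  by rewrite inE in_setD vZ vW; apply/existsP; exists z1; rewrite z1Z e1.
have /eqP/cards1P[w Nv] := mon v vN.
have : z1 \in [set z in Z | e v z] by rewrite inE z1Z e1.
have : z2 \in [set z in Z | e v z] by rewrite inE z2Z e2.
by rewrite Nv !inE => /eqP -> /eqP ->.
Qed.

Lemma self_transition_foot (W Z : {set T}) a q :
  self_transition e W Z (a :: q) -> exists2 z, z \in Z & e a z && e (last a q) z.
Proof.
case=> [[_ [hN lN _]] feet1].
have foot v : v \in Nset e W Z -> exists2 z, z \in Z & e v z.
  by rewrite inE => /andP[_ /existsP[z /andP[zZ evz]]]; exists z.
have [z zZ eaz] := foot a (hN a).
have [z' z'Z elz'] : exists2 z', z' \in Z & e (last a q) z' := foot _ (lN a).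
exists z => //; rewrite eaz.
have /eqP/cards1P[w feetE] := feet1 a.
have : z \in feet e Z a (a :: q) by rewrite inE zZ esym eaz.
have : z' \in feet e Z a (a :: q) by rewrite inE z'Z /= (esym z' (last a q)) elz' orbT.
by rewrite feetE !inE => /eqP z'w /eqP zw; rewrite zw -z'w.
Qed.

Lemma plantation_sub s (W Z W' Z' : {set T}) :
  plantation e s W Z -> W' \subset W -> Z' \subset W' -> Z :&: W' \subset Z' ->
  plantation e s W' Z'.
Proof.
move=> [_ sO hit] sW sZ' sZW.
have cycW c : is_cycle e W' c -> is_cycle e W c.
  case/and4P=> c3 uc cc /allP cW'; apply/and4P; split => //.
  by apply/allP => v /cW' /(subsetP sW).
split => // [[cs [cyc anti]] | c cW'].
  by apply: sO; exists cs; split => // i; exact: cycW.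
have /hasP[v vc vZ] := hit c (cycW c cW').
apply/hasP; exists v => //; apply: (subsetP sZW); rewrite inE vZ.
by case/and4P: cW' => _ _ _ /allP; apply.
Qed.

End Graphs.

Section SelflessReduction.
Variables (T : finType) (e : rel T) (s : nat) (Z : {set T}).
Hypotheses (esym : symmetric e) (eirr : irreflexive e).
Hypotheses (plant : plantation e s setT Z) (mon : monic e setT Z).

Local Notation F := (~: Z).

Lemma forest_neighbours_disconnected t c d :
  t \in F -> c \in F -> e t c -> e t d -> c != d ->
  ~~ connect (induced e (F :\ t)) c d.
Proof.
move=> tF cF etc etd cd; apply/negP => /connectP[p cp dE].
move: etd cd; rewrite {}dE; case/shortenP: cp => q cq uq _ etd cd.
have cFt : c \in F :\ t.
  by rewrite in_setD1 cF andbT; apply: contraTneq etc => ->; rewrite eirr.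
move: cq; rewrite path_inducedE // => /andP[cq /allP qFt].
have tcq : t \notin c :: q.
  apply/negP => /predU1P[tc | /qFt]; first by rewrite tc eirr in etc.
  by rewrite !inE eqxx.
have q0 : 1 < size (c :: q) by case: q cd {etd cq uq qFt tcq} => //=; rewrite eqxx.
have [_ _ hit] := plant.
have tcq_path : path e t (c :: q) by rewrite /= etc.
have dt : e (last t (c :: q)) t by rewrite esym.
have /hasP[v vc vZ] := hit _ (closed_path_is_cycle q0 tcq uq tcq_path dt).
have : v \in F by move: vc; rewrite !in_cons => /predU1P[-> | /predU1P[-> | /qFt /setD1P[]]].
by rewrite inE vZ.
Qed.

Definition lone_cycle (X Y : {set T}) (z : T) (p : seq T) : Prop :=
  [/\ 1 < size p, uniq p, path e z p, e (last z p) z &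
   [/\ z \in Z :\: X, {subset p <= F :\: Y} &
       forall v w, v \in p -> w \in Z -> e v w -> w = z]].

Lemma lone_cycle_is_cycle X Y z p : lone_cycle X Y z p -> is_cycle e setT (z :: p).
Proof.
case=> p2 up zp pz [/setDP[zZ _] pF _]; apply: closed_path_is_cycle => //.
by apply/negP => /pF; rewrite !inE zZ andbF.
Qed.

Lemma lone_cycle_forest_path X Y z p :
  lone_cycle X Y z p -> sorted e p /\ {subset p <= F}.
Proof. by case=> _ _ /path_sorted sp _ [_ pFY _]; split => // x /pFY /setDP[]. Qed.

Lemma lone_cycle_subset (X Y X' Y' : {set T}) z p :
  X \subset X' -> Y \subset Y' -> lone_cycle X' Y' z p -> lone_cycle X Y z p.
Proof.
move=> sX sY [p2 up zp pz [/setDP[zZ zX'] pF nbr]]; split => //; split => //.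
  by rewrite inE zZ andbT; apply: contra zX'; exact: (subsetP sX).
move=> v /pF; rewrite !inE => /andP[vY' ->]; rewrite andbT.
by apply: contra vY'; exact: (subsetP sY).
Qed.

Definition anchor (t : T) (D : {set T}) (p : seq T) : Prop :=
  [/\ t \in F, D \subset F, {in D, forall d, e t d}, #|D| <= 1 &
      {subset p <= component e (F :\: D) t}].

Lemma anchor_root t D p : anchor t D p -> t \in F :\: D.
Proof. by case=> tF _ tD _ _; rewrite inE tF andbT; apply/negP => /tD; rewrite eirr. Qed.

Lemma anchor_descent t D p q y :
  anchor t D p -> sorted e q -> {subset q <= F} -> t \notin q ->
  {in q, forall x, x \notin D} -> y \in q -> y \in component e (F :\: D) t ->
  exists2 c, anchor c [set t] q &
    #|component e (F :\ t) c| < #|component e (F :\: D) t|.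
Proof.
move=> anc sq qF tq qD yq; have [tF _ tD _ _] := anc; have tFD := anchor_root anc.
rewrite inE => /connectP[r0 tr0 yE].
move: yq; rewrite {}yE; case/shortenP: tr0 => r tr ur _ yq.
case: r tr ur yq => [|c r] /=; first by move=> _ _ tq'; rewrite tq' in tq.
move=> /andP[/and3P[etc _ cFD] cr] /and3P[tcr _ _] lq.
have /setDP[cF cD] := cFD.
have cFt : c \in F :\ t by rewrite in_setD1 cF andbT; apply: contraTneq etc => ->; rewrite eirr.
have cr_t : path (induced e (F :\ t)) c r.
  move: cr; rewrite !path_inducedE // => /andP[-> /allP rFD] /=.
  apply/allP => x xr; rewrite in_setD1 (setDP (rFD x xr)).1 andbT.
  by apply: contraNneq tcr => <-; rewrite inE xr orbT.
have qC : {subset q <= component e (F :\ t) c}.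
  apply: (sorted_sub_component esym sq _ lq); last by rewrite inE; apply/connectP; exists r.
  by move=> x xq; rewrite in_setD1 qF // andbT; apply: contraNneq tq => <-.
have CC : component e (F :\ t) c \proper component e (F :\: D) t.
  apply/properP; split; last first.
    exists t; first by rewrite inE connect0.
    by apply: contraTN isT => /(subsetP (component_sub e cFt)); rewrite !inE eqxx.
  apply/subsetP => x; rewrite !inE => /(connect_inducedD D)[cx | [d dD cd]].
    apply: connect_trans (connect1 _) (connect_induced_sub _ cx); first exact/and3P.
    by apply/subsetP => v; rewrite !inE => /and3P[-> _ ->].
  have cd' : c != d by apply: contraNneq cD => ->.
  by rewrite (negbTE (forest_neighbours_disconnected tF cF etc (tD d dD) cd')) in cd.
exists c; last exact: proper_card.
split => //; first by rewrite sub1set.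
- by move=> d; rewrite inE => /eqP ->; rewrite esym.
- by rewrite cards1.
Qed.

Lemma exists_isolated_anchor X Y z p t D :
  lone_cycle X Y z p -> anchor t D p ->
  exists z' p' t' D', [/\ lone_cycle X Y z' p', anchor t' D' p' &
    forall z'' q, lone_cycle X Y z'' q -> t' \notin q -> {in q, forall x, x \notin D'} ->
      {in q, forall x, x \notin component e (F :\: D') t'}].
Proof.
have [n] := ubnP #|component e (F :\: D) t|.
elim: n => // n IH in z p t D *; rewrite ltnS => small lp anc.
case: (classic (exists z' q y, [/\ lone_cycle X Y z' q, t \notin q,
    {in q, forall x, x \notin D}, y \in q & y \in component e (F :\: D) t]))
  => [[z' [q [y [lq tq qD yq yC]]]] | isolated].
  have [sq qF] := lone_cycle_forest_path lq.
  have [c ancc smaller] := anchor_descent anc sq qF tq qD yq yC.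
  exact: IH (leq_trans smaller small) lq ancc.
exists z, p, t, D; split => // z' q lq tq qD y yq; apply/negP => yC.
by apply: isolated; exists z', q, y.
Qed.

Lemma isolated_lone_cycles_anticomplete X Y z p t D z' q :
  lone_cycle X Y z p -> anchor t D p -> lone_cycle X Y z' q -> z' != z ->
  {in q, forall x, x \notin D} -> {in q, forall x, x \notin component e (F :\: D) t} ->
  anticomplete e (z :: p) (z' :: q).
Proof.
move=> [_ _ _ _ [/setDP[zZ _] pFY nbr_p]] anc [_ _ _ _ [/setDP[z'Z _] qFY nbr_q]].
move=> z'z qD qC; apply/anticompleteP => x y.
have [_ _ _ _ pC] := anc.
have [stable _] := mon.
have notZ v A : v \in F :\: A -> v \notin Z by move=> /setDP[]; rewrite inE.
rewrite !in_cons => /predU1P[-> | xp] /predU1P[-> | yq].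
- by rewrite eq_sym z'z stable.
- have yZ := notZ _ _ (qFY y yq).
  rewrite esym; apply/andP; split; first by apply: contraNneq yZ => <-.
  by apply/negP => /(nbr_q y z yq zZ) zz'; rewrite zz' eqxx in z'z.
- have xZ := notZ _ _ (pFY x xp).
  apply/andP; split; first by apply: contraNneq xZ => ->.
  by apply/negP => /(nbr_p x z' xp z'Z) zz'; rewrite zz' eqxx in z'z.
- have xC := pC x xp; have yC := qC y yq.
  apply/andP; split; first by apply: contraNneq yC => <-.
  apply/negP => exy; move/negP: yC; apply.
  apply: component_closed xC (subsetP (component_sub e (anchor_root anc)) x xC) _ exy.
  by rewrite inE qD //; have /setDP[] := qFY y yq.
Qed.

Lemma lone_cycle_isolation X Y z0 p0 : lone_cycle X Y z0 p0 ->
  exists z p t (D : {set T}), [/\ lone_cycle X Y z p, t \in F, D \subset F, #|D| <= 1 &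
    forall z' q, lone_cycle (z |: X) (t |: D :|: Y) z' q ->
      anticomplete e (z :: p) (z' :: q)].
Proof.
move=> lp0; have [sp0 p0F] := lone_cycle_forest_path lp0.
have [a ap0] : exists a, a \in p0.
  by case: lp0; case: (p0) => // a *; exists a; exact: mem_head.
have anc0 : anchor a set0 p0.
  split; rewrite ?sub0set ?cards0 ?p0F //; first by move=> d; rewrite in_set0.
  by apply: sorted_sub_component esym sp0 _ ap0 _; rewrite ?setD0 // inE connect0.
have [z [p [t [D [lp anc isolated]]]]] := exists_isolated_anchor lp0 anc0.
have [tF DF _ D1 _] := anc.
exists z, p, t, D; split => // z' q lq.
have [_ _ _ _ [z'ZX qFY _]] := lq.
have lq' := lone_cycle_subset (subsetUr _ _) (subsetUr _ _) lq.
have qD : {in q, forall x, x \notin D}.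
  by move=> x /qFY; rewrite !inE !negb_or => /andP[/andP[/andP[]]].
have tq : t \notin q by apply/negP => /qFY; rewrite !inE eqxx.
apply: isolated_lone_cycles_anticomplete lp anc lq' _ qD (isolated _ _ lq' tq qD).
by apply: contraTneq z'ZX => ->; rewrite !inE eqxx.
Qed.

Definition packing (X Y : {set T}) (cs : seq (seq T)) : Prop :=
  [/\ X \subset Z, Y \subset F, #|X| <= size cs, #|Y| <= (size cs).*2 &
   [/\ all (is_cycle e setT) cs, pairwise (anticomplete e) cs &
       forall c z q, c \in cs -> lone_cycle X Y z q -> anticomplete e c (z :: q)]].

Lemma packing_size X Y cs : packing X Y cs -> size cs < s.
Proof. by case: plant => _ sO _ [_ _ _ _ [cyc anti _]]; exact: sO_free_size sO cyc anti. Qed.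

Lemma packing_extend X Y cs z0 p0 :
  packing X Y cs -> lone_cycle X Y z0 p0 -> exists X' Y' c, packing X' Y' (c :: cs).
Proof.
move=> [XZ YF Xcs Ycs [cyc anti shield]] lp0.
have [z [p [t [D [lp tF DF D1 isolated]]]]] := lone_cycle_isolation lp0.
have [_ _ _ _ [/setDP[zZ _] _ _]] := lp.
exists (z |: X), (t |: D :|: Y), (z :: p); split.
- by rewrite subUset sub1set zZ.
- by rewrite !subUset sub1set tF DF.
- by rewrite cardsU1 /=; have := leq_b1 (z \notin X); lia.
- have := (leq_card_setU (t |: D) Y).1; rewrite cardsU1 /=; have := leq_b1 (t \notin D); lia.
split.
- by rewrite /= (lone_cycle_is_cycle lp).
- rewrite /= anti andbT; apply/allP => c ccs; rewrite anticompleteC //; exact: shield lp.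
- move=> c z' q; rewrite in_cons => /predU1P[-> | ccs] lq; first exact: isolated.
  by apply: shield ccs (lone_cycle_subset (subsetUr _ _) (subsetUr _ _) lq).
Qed.

Lemma lone_cycles_removable : exists X Y : {set T},
  [/\ X \subset Z, Y \subset F, #|X| < s, #|Y| < s.*2 & forall z q, ~ lone_cycle X Y z q].
Proof.
suff: forall X Y cs, packing X Y cs -> exists X Y : {set T},
    [/\ X \subset Z, Y \subset F, #|X| < s, #|Y| < s.*2 & forall z q, ~ lone_cycle X Y z q].
  by move=> /(_ set0 set0 [::]); apply; split; rewrite ?sub0set ?cards0.
move=> X Y cs; have [n] := ubnP (s - size cs).
elim: n => // n IH in X Y cs *; rewrite ltnS => bound pack.
have cs_s := packing_size pack.
case: (classic (exists z q, lone_cycle X Y z q)) => [[z [q lq]] | none].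
  have [X' [Y' [c pack']]] := packing_extend pack lq.
  by apply: IH pack'; rewrite /=; lia.
have [XZ YF Xcs Ycs _] := pack; exists X, Y; split => //; try lia.
by move=> z q lq; apply: none; exists z, q.
Qed.

Definition prune (X Y : {set T}) : {set T} * {set T} :=
  let WZ := explode e setT Z X in delete WZ.1 WZ.2 Y.

Lemma mem_prune X Y v :
  (v \in (prune X Y).1) = [&& v \notin X, v \notin Y & (v \in Z) || ~~ [exists x in X, e x v]].
Proof.
by rewrite !inE andbT negb_and negbK; case: (v \in X); case: (v \in Y); rewrite ?andbF ?andbT.
Qed.

Lemma prune_plantation X (Y : {set T}) : Y \subset F -> plantation e s (prune X Y).1 (prune X Y).2.
Proof.
move=> YF; apply: plantation_sub plant (subsetT _) _ _.
  apply/subsetP => v /setDP[vZ vX]; rewrite mem_prune vX vZ /= andbT.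
  by apply/negP => /(subsetP YF); rewrite inE vZ.
by apply/subsetP => v /setIP[vZ]; rewrite mem_prune => /and3P[vX _ _]; rewrite inE vX.
Qed.

Lemma prune_forest_vertex X Y v : v \in (prune X Y).1 :\: (prune X Y).2 ->
  [/\ v \notin Z, v \notin Y & ~~ [exists x in X, e x v]].
Proof.
case/setDP; rewrite mem_prune => /and3P[vX vY vZX]; rewrite /= in_setD vX /= => vZ.
by split => //; move: vZX; rewrite (negbTE vZ).
Qed.

Lemma self_transition_lone_cycle X Y p :
  self_transition e (prune X Y).1 (prune X Y).2 p -> exists z, lone_cycle X Y z p.
Proof.
case: p => [|a q] st; first by case: st => [[[]]].
have [z /setDP[zZ zX] /andP[eaz elz]] := self_transition_foot esym st.
have [[[p2 up sp /allP pW] [_ _ inner]] _] := st.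
exists z; split => //=; first by rewrite esym eaz.
split => [|v /pW /prune_forest_vertex[vZ vY _] | v w vp wZ evw]; first by rewrite inE zZ zX.
  by rewrite !inE vY vZ.
have [vZ _ vX] := prune_forest_vertex (pW v vp).
case: (eqVneq v a) => [va | va]; first subst v.
  exact: monic_neighbour_unique mon (in_setT _) vZ wZ zZ evw eaz.
case: (eqVneq v (last a q)) => [vl | vl]; first subst v.
  exact: monic_neighbour_unique mon (in_setT _) vZ wZ zZ evw elz.
have [i /andP[i0 i_last] vE] := interior_index (x0 := a) vp va vl.
have wX : w \notin X by apply: contraNN vX => wX; apply/existsP; exists w; rewrite wX esym.
case/negP: (inner a i i0 i_last); rewrite vE inE (pW v vp) /=.
by apply/existsP; exists w; rewrite in_setD wX wZ evw.
Qed.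

Lemma prune_selfless X Y :
  (forall z q, ~ lone_cycle X Y z q) -> selfless e (prune X Y).1 (prune X Y).2.
Proof. by move=> none p /self_transition_lone_cycle[z]; exact: none. Qed.

End SelflessReduction.

Theorem mainTheorem9 (T : finType) (e : rel T) (s : nat) (Z : {set T}) :
  simple_graph e -> 1 <= s ->
  plantation e s [set: T] Z -> monic e [set: T] Z ->
  exists (X Y : {set T}),
    [/\ X \subset Z, Y \subset ~: Z, #|X| < s, #|Y| < 2 * s * s`! &
      let WZ := explode e [set: T] Z X in
      let WZ' := delete WZ.1 WZ.2 Y in
      plantation e s WZ'.1 WZ'.2 /\ selfless e WZ'.1 WZ'.2].
Proof.
move=> [esym eirr] _ plant mon.
have [X [Y [XZ YF Xs Ys none]]] := lone_cycles_removable esym eirr plant mon.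
exists X, Y; split => //.
  by rewrite (leq_trans Ys) // -mul2n leq_pmulr ?fact_gt0.
split; [exact: prune_plantation | exact: prune_selfless].
Qed.
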